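(* There is a constant $c>0$ such that for every $\omega$-word $\xi\in X^\omega$ that is quasiperiodic (with some quasiperiod $q\in X^*\setminus\{e\}$) there is $n_\xi\in\mathbb{N}$ with $f(\xi,n)\le c\cdot t_P^n$ for all $n\ge n_\xi$, where $t_P\approx1.324718$ is the unique real root of $t^3-t-1$.
   Context: $X$ is a finite alphabet with $|X|\ge2$; $X^*$ the finite words (empty word $e$), $X^\omega$ the infinite words, $X^n$ the words of length $n$. $w\sqsubseteq\eta$ means $w$ is a prefix of $\eta$. An $\omega$-word $\xi$ is quasiperiodic with quasiperiod $q\in X^*\setminus\{e\}$ if for every $j\in\mathbb{N}$ there is a prefix $u_j\sqsubseteq\xi$ with $j-|q|<|u_j|\le j$ and $u_j\cdot q\sqsubseteq\xi$. $f(\xi,n):=|\mathrm{infix}(\xi)\cap X^n|$ is the number of distinct factors (subwords) of $\xi$ of length $n$. *)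

From mathcomp Require Import all_boot.
From Stdlib Require Import Reals ClassicalEpsilon.
Set Implicit Arguments. Unset Strict Implicit. Unset Printing Implicit Defensive.

Definition is_prefix (X : Type) (u : seq X) (xi : nat -> X) : Prop :=
  forall i, i < size u -> nth (xi i) u i = xi i.

Definition quasiperiodic_with (X : Type) (xi : nat -> X) (q : seq X) : Prop :=
  0 < size q /\
  forall j : nat, exists u : seq X,
    j < size u + size q /\ size u <= j /\ is_prefix u xi /\ is_prefix (u ++ q) xi.

Definition quasiperiodic (X : Type) (xi : nat -> X) : Prop :=
  exists q : seq X, quasiperiodic_with xi q.

Definition is_factor (X : Type) (w : seq X) (xi : nat -> X) : Prop :=
  exists m : nat, forall i, i < size w -> nth (xi (m + i)) w i = xi (m + i).

Definition factorb (X : Type) (xi : nat -> X) (w : seq X) : bool :=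
  if excluded_middle_informative (is_factor w xi) then true else false.

(* f(xi, n) = number of distinct factors of xi of length n *)
Definition fcompl (X : finType) (xi : nat -> X) (n : nat) : nat :=
  #|[set w : n.-tuple X | factorb xi w]|.

(* Let p be the least period of a quasiperiod q of xi, and call c a run start
   when q occurs at c but not at c - p. Between consecutive run starts xi is
   p-periodic, and their distance d is admissible: d > p and p does not divide
   d, since otherwise q would also occur p positions before the later one.
   Hence every factor of length n is a periodic word, possibly followed by a
   factor read from a run start, and such a factor splits into a periodic block
   of admissible length followed by a factor read from the next run start.
   Counting these decompositions bounds the factors of length N read from run
   starts by s^N whenever sum_(d admissible, d <= N) s^(N-d) <= s^N - 1, which
   holds for s = tP if p <= 3 and for s = 33/25 < tP if p > 3; altogether
   f(xi, n) <= p s^(n+1) / (s - 1). *)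

From HB Require Import structures.
From mathcomp Require Import all_boot zify.
From Stdlib Require Import Reals ClassicalEpsilon Lra Psatz.
Set Implicit Arguments. Unset Strict Implicit. Unset Printing Implicit Defensive.

HB.instance Definition _ :=
  Monoid.isComLaw.Build R 0%R Rplus (fun x y z => esym (Rplus_assoc x y z)) Rplus_comm Rplus_0_l.
HB.instance Definition _ := Monoid.isMulLaw.Build R 0%R Rmult Rmult_0_l Rmult_0_r.
HB.instance Definition _ :=
  Monoid.isAddLaw.Build R Rmult Rplus Rmult_plus_distr_r Rmult_plus_distr_l.

Lemma INR_sum (I : Type) (r : seq I) (P : pred I) (F : I -> nat) :
  INR (\sum_(i <- r | P i) F i) = \big[Rplus/0%R]_(i <- r | P i) INR (F i).
Proof. exact: (big_morph _ plus_INR). Qed.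

Lemma le_bigR (I : Type) (r : seq I) (P : pred I) (F G : I -> R) :
  (forall i, P i -> (F i <= G i)%R) ->
  (\big[Rplus/0%R]_(i <- r | P i) F i <= \big[Rplus/0%R]_(i <- r | P i) G i)%R.
Proof. by move=> FG; apply: big_ind2 => //; [exact: Rle_refl | exact: Rplus_le_compat]. Qed.

Definition admissible_gap (p d : nat) : bool := (p < d) && ~~ (p %| d).

Section RealBounds.
Local Open Scope R_scope.

Definition geom (s : R) (n : nat) : R := \big[Rplus/0]_(0 <= j < n) s ^ j.

Lemma geom0 s : geom s 0 = 0.
Proof. by rewrite /geom big_geq. Qed.

Lemma geomSr s n : geom s n.+1 = geom s n + s ^ n.
Proof. by rewrite /geom big_nat_recr. Qed.

Lemma geomSl s n : geom s n.+1 = s * geom s n + 1.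
Proof. by rewrite /geom big_nat_recl // big_distrr Rplus_comm. Qed.

Lemma geom_closed s n : (s - 1) * geom s n = s ^ n - 1.
Proof.
elim: n => [|n IH]; first by rewrite geom0 /=; ring.
by rewrite geomSr Rmult_plus_distr_l IH /=; ring.
Qed.

Lemma geom_le s n : 1 < s -> geom s n <= s ^ n / (s - 1).
Proof.
move=> s_gt1; apply: (Rmult_le_reg_l (s - 1)); first lra.
rewrite geom_closed.
have -> : (s - 1) * (s ^ n / (s - 1)) = s ^ n by field; lra.
lra.
Qed.

Definition gap_sum (s : R) (p N : nat) : R :=
  \big[Rplus/0]_(d <- iota 1 N | admissible_gap p d) s ^ (N - d).

Lemma gap_sumS s p N :
  gap_sum s p N.+1 = s * gap_sum s p N + (if admissible_gap p N.+1 then 1 else 0).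
Proof.
rewrite /gap_sum -[N.+1]addn1 iotaD big_cat big_cons big_nil add1n addn1 subnn.
congr (_ + _); last by case: ifP => _ //; exact: Rplus_0_r.
rewrite big_distrr -[LHS]big_filter -[RHS]big_filter; apply: eq_big_seq => d.
by rewrite mem_filter mem_iota add1n ltnS => /and3P[_ _ le_dN]; rewrite subSn.
Qed.

Lemma gap_sum_small (s : R) (p N : nat) : (N <= p)%nat -> gap_sum s p N = 0.
Proof.
elim: N => [|N IH] le_Np; first by rewrite /gap_sum big_nil.
by rewrite gap_sumS IH ?(ltnW le_Np) // /admissible_gap ltnNge le_Np /= Rmult_0_r Rplus_0_r.
Qed.

Definition geom_dominated (p : nat) (s : R) : Prop :=
  forall i, (i < p)%nat -> geom s i.+1 <= s ^ (p + i).

(* Each step multiplies by s and adds 1 unless p divides p + k + 1; the error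
   term only depends on the phase k mod p, and geom_dominated is what lets it
   wrap around when the phase returns to 0. *)
Lemma gap_sum_shifted s p : (0 < p)%nat -> 1 <= s -> geom_dominated p s -> forall k,
  gap_sum s p (p + k) <= s ^ (p + k) - s ^ (p + k %% p) + geom s (k %% p).
Proof.
move=> p_gt0 s_ge1 dom; elim=> [|k IH].
  by rewrite addn0 mod0n addn0 gap_sum_small // geom0; lra.
have s_ge0 : 0 <= s by lra.
have lt_ip := ltn_pmod k p_gt0.
have dvd_k : (p %| (p + k).+1) = (p %| k.+1) by rewrite -addnS (dvdn_addr _ (dvdnn p)).
rewrite addnS gap_sumS modnS /admissible_gap dvd_k ltnS leq_addr /=.
set i := k %% p in IH lt_ip *.
have {}IH := Rmult_le_compat_l s _ _ s_ge0 IH.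
case: (boolP (p %| k.+1)) => [dvd_p | ndvd_p] /=.
  have ip : i.+1 = p.
    apply/eqP; rewrite eqn_leq lt_ip dvdn_leq //.
    by move: dvd_p; rewrite {1}(divn_eq k p) -addnS (dvdn_addr _ (dvdn_mull _ (dvdnn p))).
  have pow_p : s ^ (p + 0) = s * s ^ i by rewrite addn0 -ip.
  have := Rmult_le_compat_l s _ _ s_ge0 (dom i lt_ip).
  rewrite geom0 geomSr pow_p; lra.
have pow_piS : s ^ (p + i.+1) = s * s ^ (p + i) by rewrite addnS.
rewrite geomSl pow_piS; lra.
Qed.

Lemma gap_sum_le s p N : (0 < p)%nat -> 1 <= s -> geom_dominated p s ->
  gap_sum s p N <= s ^ N - 1.
Proof.
move=> p_gt0 s_ge1 dom; case: (leqP N p) => [le_Np | lt_pN].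
  by rewrite gap_sum_small //; have := pow_R1_Rle s N s_ge1; lra.
have := gap_sum_shifted p_gt0 s_ge1 dom (N - p); rewrite subnKC ?(ltnW lt_pN) //.
have := dom _ (ltn_pmod (N - p) p_gt0); rewrite geomSr.
have := pow_R1_Rle s ((N - p) %% p) s_ge1; lra.
Qed.

Lemma plastic_gt (t : R) : t ^ 3 - t - 1 = 0 -> 33/25 < t.
Proof.
move=> root_t; case: (Rlt_le_dec (33/25) t) => // le_t; exfalso.
have pos : 0 < t * t + 33/25 * t + 464/625 by have := pow2_ge_0 (t + 33/50); simpl; lra.
have := Rmult_le_pos (33/25 - t) _ ltac:(lra) (Rlt_le _ _ pos).
simpl in root_t; lra.
Qed.

Lemma geom_dominated_plastic t p : t ^ 3 - t - 1 = 0 -> (0 < p <= 3)%nat -> geom_dominated p t.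
Proof.
move=> root_t /andP[p_gt0 p_le3] i lt_ip; have := plastic_gt root_t; simpl in root_t.
by case: p p_gt0 p_le3 lt_ip => [|[|[|[|p]]]] //= _ _; case: i => [|[|[|i]]] //= _;
  rewrite !geomSr geom0 /=; nra.
Qed.

(* 33/25 is a rational below tP (plastic_gt) for which the condition still
   holds for every p >= 4. *)
Lemma geom_dominated_33_25 p : (3 < p)%nat -> geom_dominated p (33/25).
Proof.
move=> p_gt3 i lt_ip; set s := 33/25.
have p_gt0 : (0 < p)%nat by apply: leq_trans p_gt3.
have s_ge1 : 1 <= s by rewrite /s; lra.
have geom_i := geom_closed s i.+1.
have -> : (p + i = i.+1 + p.-1)%nat by rewrite addSn -addnS prednK // addnC.
rewrite pow_add.
have pow_p1 : s ^ 3 <= s ^ p.-1 by apply: Rle_pow => //; apply/leP; rewrite -ltnS prednK.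
have pow_i : s ^ i.+1 <= s * s ^ p.-1 by apply: (Rle_pow _ _ p.-1.+1) => //; apply/leP; rewrite prednK.
have pow_i1 := pow_R1_Rle s i.+1 s_ge1.
have pow3 : s ^ 3 = 35937/15625 by rewrite /s /=; lra.
rewrite pow3 in pow_p1; move: geom_i pow_i pow_i1 pow_p1; rewrite /s.
move: (geom _ _) (_ ^ i.+1) (_ ^ p.-1) => g a b geom_i pow_i pow_i1 pow_p1.
have -> : g = (a - 1) * (25/8) by lra.
case: (Rle_lt_dec (25/8) b) => [b_big | b_small].
  have : a * (25/8) <= a * b by apply: Rmult_le_compat_l; lra.
  lra.
have := Rmult_le_pos (33/25 * b - a) (25/8 - b) ltac:(lra) ltac:(lra).
nra.
Qed.

Lemma pow_dominated (K c s t : R) : 0 < c -> 0 <= s < t ->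
  exists N, forall n, (N <= n)%nat -> K * s ^ n <= c * t ^ n.
Proof.
move=> c_gt0 [s_ge0 lt_st]; have t_gt0 : 0 < t by lra.
set u := s / t; have s_ut : s = u * t by rewrite /u; field; lra.
have u_ge0 : 0 <= u by apply: Rmult_le_pos; [|left; apply: Rinv_0_lt_compat]; lra.
have u_lt1 : Rabs u < 1 by rewrite Rabs_pos_eq //; nra.
set KK := Rabs K + 1; have KK_gt0 : 0 < KK by have := Rabs_pos K; rewrite /KK; lra.
have [N small] := pow_lt_1_zero u u_lt1 (c / KK) (Rdiv_lt_0_compat _ _ c_gt0 KK_gt0).
exists N => n le_Nn; have := small n (elimT leP le_Nn).
rewrite Rabs_pos_eq; last exact: pow_le.
rewrite s_ut Rpow_mult_distr => small_n.
have ut_ge0 : 0 <= u ^ n * t ^ n by apply: Rmult_le_pos; apply: pow_le; lra.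
have K_le : K <= KK by have := Rle_abs K; rewrite /KK; lra.
have KK_small : u ^ n * KK <= c.
  have := Rmult_lt_compat_r KK _ _ KK_gt0 small_n.
  have -> : c / KK * KK = c by field; lra.
  lra.
apply: (Rle_trans _ _ _ (Rmult_le_compat_r _ _ _ ut_ge0 K_le)).
rewrite -Rmult_assoc (Rmult_comm KK).
by apply: Rmult_le_compat_r KK_small; apply: pow_le; lra.
Qed.

End RealBounds.

Definition factor_at (X : Type) (xi : nat -> X) (m n : nat) : seq X :=
  mkseq (fun i => xi (m + i)) n.

Lemma mkseqD (T : Type) (f : nat -> T) m n :
  mkseq f (m + n) = mkseq f m ++ mkseq (fun i => f (m + i)) n.
Proof.
rewrite /mkseq iotaD map_cat add0n; congr (_ ++ _).
by rewrite -[m in iota m]addn0 iotaDl -map_comp.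
Qed.

Lemma fcompl_le_size (X : finType) (xi : nat -> X) n (L : seq (seq X)) :
  (forall m, factor_at xi m n \in L) -> fcompl xi n <= size L.
Proof.
move=> covered; rewrite /fcompl cardE -(size_map val).
apply: uniq_leq_size => [|_ /mapP[w w_factor ->]].
  by rewrite map_inj_uniq ?enum_uniq //; exact: val_inj.
move: w_factor; rewrite mem_enum inE /factorb.
case: excluded_middle_informative => // -[m occ_m] _.
suff -> : val w = factor_at xi m n by [].
apply: (@eq_from_nth _ (xi 0)) => [|i]; rewrite size_tuple ?size_mkseq // => lt_in.
by rewrite nth_mkseq // -occ_m ?size_tuple //; apply: set_nth_default; rewrite size_tuple.
Qed.

Section QuasiperiodicWord.

Variables (X : eqType) (xi : nat -> X) (q : seq X).
Local Notation x0 := (xi 0).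

Definition occurs_at (o : nat) : bool :=
  all (fun k => nth x0 q k == xi (o + k)) (iota 0 (size q)).

Lemma occurs_atP o : reflect (forall k, k < size q -> nth x0 q k = xi (o + k)) (occurs_at o).
Proof.
apply: (iffP allP) => [occ_o k lt_k | occ_o k]; first by apply/eqP/occ_o; rewrite mem_iota.
by rewrite mem_iota => /andP[_ lt_k]; apply/eqP/occ_o.
Qed.

Definition is_period (d : nat) : bool :=
  (0 < d) && all (fun i => nth x0 q i == nth x0 q (i + d)) (iota 0 (size q - d)).

Lemma is_periodP d : reflect
  (0 < d /\ forall i, i + d < size q -> nth x0 q i = nth x0 q (i + d)) (is_period d).
Proof.
apply: (iffP andP) => -[d_gt0 per_d]; split=> //.
  by move=> i lt_id; apply/eqP/(allP per_d); rewrite mem_iota ltn_subRL addnC.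
by apply/allP => i; rewrite mem_iota ltn_subRL addnC => /andP[_ /per_d ->].
Qed.

Lemma is_period_size : 0 < size q -> is_period (size q).
Proof. by move=> q_gt0; rewrite /is_period subnn q_gt0. Qed.

Variable p : nat.
Hypothesis p_period : is_period p.
Hypothesis p_min : forall d, is_period d -> p <= d.
Hypothesis xi_qp : quasiperiodic_with xi q.

Lemma p_gt0 : 0 < p.
Proof. by case/andP: p_period. Qed.

Definition periodic_ext (i : nat) : X := nth x0 q (i %% p).

Lemma periodic_extMD k i : periodic_ext (k * p + i) = periodic_ext i.
Proof. by rewrite /periodic_ext modnMDl. Qed.

Lemma periodic_extDl i : periodic_ext (p + i) = periodic_ext i.
Proof. by rewrite /periodic_ext modnDl. Qed.

Lemma periodic_ext_mod a i : periodic_ext (a %% p + i) = periodic_ext (a + i).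
Proof. by rewrite /periodic_ext modnDml. Qed.

Lemma nth_periodic_ext i : i < size q -> nth x0 q i = periodic_ext i.
Proof.
elim/ltn_ind: i => i IH lt_i; case: (ltnP i p) => [lt_ip | le_pi].
  by rewrite /periodic_ext modn_small.
have [_ per_p] := is_periodP _ p_period.
have lt_ipi : i - p < i by rewrite ltn_subrL p_gt0 (leq_trans p_gt0 le_pi).
rewrite -[in LHS](subnK le_pi) -per_p ?subnK // IH //; last exact: ltn_trans lt_ipi lt_i.
by rewrite -{2}(subnKC le_pi) periodic_extDl.
Qed.

(* Two occurrences closer than p would give q a smaller period. *)
Lemma occurs_at_sep a b : occurs_at a -> occurs_at b -> a < b -> a + p <= b.
Proof.
move=> /occurs_atP occ_a /occurs_atP occ_b lt_ab; rewrite -leq_subRL ?(ltnW lt_ab) //.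
apply/p_min/is_periodP; split=> [|i lt_i]; first by rewrite subn_gt0.
rewrite (occ_a _ lt_i) occ_b ?(leq_ltn_trans (leq_addr _ _) lt_i) //.
by rewrite addnCA subnKC ?(ltnW lt_ab) // addnC.
Qed.

Lemma occurs_around j : exists2 o, occurs_at o & o <= j < o + size q.
Proof.
have [_ /(_ j) [u [lt_j [le_uj [_ pre_uq]]]]] := xi_qp.
exists (size u); last by rewrite le_uj.
apply/occurs_atP => k lt_k; have := pre_uq (size u + k).
rewrite size_cat ltn_add2l nth_cat [_ + _ < _]ltnNge leq_addr addKn => /(_ lt_k) <-.
exact: set_nth_default.
Qed.

Definition run_start (c : nat) : bool := occurs_at c && ~~ ((p <= c) && occurs_at (c - p)).

Definition run_start_free (a b : nat) : Prop := forall y, a < y < b -> ~~ run_start y.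

Lemma run_start0 : run_start 0.
Proof.
have [o occ_o /andP[le_o0 _]] := occurs_around 0.
have o0 : o = 0 by apply/eqP; rewrite -leqn0.
by rewrite /run_start -o0 occ_o o0 leqNgt p_gt0.
Qed.

Lemma occurs_at_dvd c x o : occurs_at c -> run_start_free c x.+1 ->
  c <= o <= x -> occurs_at o -> p %| o - c.
Proof.
move=> occ_c free; elim/ltn_ind: o => o IH /andP[le_co le_ox] occ_o.
case: (ltngtP c o) le_co => // [lt_co | <-] _; last by rewrite subnn dvdn0.
have /andP[le_po occ_op] : (p <= o) && occurs_at (o - p).
  by move: (free o); rewrite lt_co ltnS le_ox /run_start occ_o negbK; apply.
have le_cop : c <= o - p.
  rewrite leqNgt; apply/negP => lt_opc.
  by have := occurs_at_sep occ_op occ_c lt_opc; rewrite subnK // leqNgt lt_co.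
have := IH (o - p) _ _ occ_op; rewrite le_cop (leq_trans (leq_subr p o) le_ox).
rewrite ltn_subrL p_gt0 (leq_trans p_gt0 le_po) => /(_ isT isT).
have le_poc : p <= o - c by rewrite leq_subRL ?(ltnW lt_co) // addnC -leq_subRL.
by rewrite subnAC => dvd_ocp; rewrite -(subnK le_poc) (dvdn_addl _ (dvdnn p)).
Qed.

Lemma xi_periodic c x : occurs_at c -> c <= x -> run_start_free c x.+1 ->
  xi x = periodic_ext (x - c).
Proof.
move=> occ_c le_cx free; have [o occ_o /andP[le_ox lt_xo]] := occurs_around x.
case: (ltnP o c) => [lt_oc | le_co].
  have lt_xc : x - c < size q.
    by rewrite ltn_subLR // (leq_trans lt_xo) // leq_add2r (ltnW lt_oc).
  by rewrite -(nth_periodic_ext lt_xc) (occurs_atP _ occ_c _ lt_xc) subnKC.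
have lt_xo' : x - o < size q by rewrite ltn_subLR.
rewrite -{1}(subnKC le_ox) -(occurs_atP _ occ_o _ lt_xo') nth_periodic_ext //.
have dvd_oc := occurs_at_dvd occ_c free (introT andP (conj le_co le_ox)) occ_o.
by rewrite -(periodic_extMD ((o - c) %/ p)) divnK // addnC addnBA // subnK.
Qed.

(* If p | y - c, the p-periodicity of xi on [c, y) makes q occur at y - p,
   so y would not be a run start; this includes the case y - c = p. *)
Lemma run_start_gap c y : run_start c -> run_start y -> c < y -> run_start_free c y ->
  admissible_gap p (y - c).
Proof.
move=> /andP[occ_c _] /andP[occ_y not_cont] lt_cy free.
have le_pyc : p <= y - c by rewrite leq_subRL ?(ltnW lt_cy) // occurs_at_sep.
have le_py : p <= y := leq_trans le_pyc (leq_subr c y).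
have le_cyp : c <= y - p by rewrite leq_subRL // addnC -leq_subRL // (ltnW lt_cy).
have run_continues : p %| y - c -> occurs_at (y - p).
  move=> dvd_yc; apply/occurs_atP => i lt_i; rewrite nth_periodic_ext //.
  case: (ltnP i p) => [lt_ip | le_pi].
    have lt_y : y - p + i < y by rewrite -ltn_subRL subKn.
    rewrite (xi_periodic occ_c (leq_trans le_cyp (leq_addr _ _))); last first.
      by move=> z /andP[lt_cz lt_zy]; apply: free; rewrite lt_cz (leq_trans lt_zy lt_y).
    rewrite -addnBAC // subnAC -(divnK dvd_yc).
    by rewrite -[X in _ * p - X]mul1n -mulnBl periodic_extMD.
  have lt_ip : i - p < size q by apply: leq_ltn_trans lt_i; apply: leq_subr.
  rewrite addnBAC // -addnBA // -(occurs_atP _ occ_y _ lt_ip) nth_periodic_ext //.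
  by rewrite -{1}(subnKC le_pi) periodic_extDl.
apply/andP; split.
  rewrite ltn_neqAle le_pyc andbT; apply: contraNneq not_cont => eq_p.
  by rewrite le_py run_continues // -eq_p.
by apply: contraNN not_cont => /run_continues ->; rewrite le_py.
Qed.

Lemma last_run_start s : exists c, [/\ run_start c, c <= s & run_start_free c s.+1].
Proof.
have ex_c : exists c, run_start c && (c <= s) by exists 0; rewrite run_start0.
have c_le : forall c, run_start c && (c <= s) -> c <= s by move=> c /andP[].
have [c /andP[run_c le_cs] c_max] := ex_maxnP ex_c c_le.
exists c; split=> // y /andP[lt_cy le_ys]; apply/negP => run_y.
by have := c_max y; rewrite run_y -ltnS le_ys leqNgt lt_cy => /(_ isT).
Qed.

Definition periodic_word (k n : nat) : seq X := mkseq (fun i => periodic_ext (k + i)) n.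

Lemma factor_at_periodic c s n : occurs_at c -> c <= s -> run_start_free c (s + n) ->
  factor_at xi s n = periodic_word ((s - c) %% p) n.
Proof.
move=> occ_c le_cs free; apply/eq_in_map => i; rewrite mem_iota add0n => /andP[_ lt_in].
rewrite (xi_periodic occ_c (leq_trans le_cs (leq_addr i s))).
  by rewrite periodic_ext_mod addnBAC.
move=> z /andP[lt_cz]; rewrite ltnS => le_zsi; apply: free.
by rewrite lt_cz (leq_ltn_trans le_zsi) // ltn_add2l.
Qed.

Lemma factor_at_decomp c s N : occurs_at c -> c <= s -> run_start_free c s.+1 ->
  factor_at xi s N = periodic_word ((s - c) %% p) N \/
  exists y, [/\ s < y <= s + N, run_start y, run_start_free c y &
    factor_at xi s N = periodic_word ((s - c) %% p) (y - s) ++ factor_at xi y (s + N - y)].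
Proof.
move=> occ_c le_cs free_s.
case: (boolP (has run_start (iota s.+1 N))) => [/hasP[y0 y0_in run_y0] | /hasPn none].
  have ex_y : exists y, (s < y <= s + N) && run_start y.
    by exists y0; move: y0_in; rewrite mem_iota addSn ltnS run_y0 andbT.
  have [y /andP[/andP[lt_sy le_y] run_y] y_min] := ex_minnP ex_y.
  have free_y : run_start_free c y.
    move=> z /andP[lt_cz lt_zy]; case: (leqP z s) => [le_zs | lt_sz].
      by apply: free_s; rewrite lt_cz ltnS.
    apply/negP => run_z; have := y_min z.
    by rewrite lt_sz run_z (leq_trans (ltnW lt_zy) le_y) leqNgt lt_zy => /(_ isT).
  right; exists y; split; rewrite ?lt_sy //.
  have split_N : N = y - s + (s + N - y) by lia.
  rewrite /factor_at {1}split_N mkseqD; congr (_ ++ _).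
    by apply: factor_at_periodic; rewrite // subnKC ?(ltnW lt_sy).
  by apply: eq_mkseq => i; rewrite addnA subnKC ?(ltnW lt_sy).
left; apply: factor_at_periodic => // z /andP[lt_cz lt_zsN].
case: (leqP z s) => [le_zs | lt_sz]; first by apply: free_s; rewrite lt_cz ltnS.
by apply: none; rewrite mem_iota lt_sz addSn ltnS (ltnW lt_zsN).
Qed.

Lemma factor_at_run_start c N : run_start c ->
  factor_at xi c N = periodic_word 0 N \/
  exists d y, [/\ d <= N, admissible_gap p d, run_start y &
    factor_at xi c N = periodic_word 0 d ++ factor_at xi y (N - d)].
Proof.
move=> run_c; have occ_c : occurs_at c by case/andP: run_c.
have free_c : run_start_free c c.+1 by move=> y /andP[lt_cy]; rewrite ltnS leqNgt lt_cy.
case: (factor_at_decomp N occ_c (leqnn c) free_c); rewrite subnn mod0n; first by left.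
move=> [y [/andP[lt_cy le_y] run_y free_y ->]]; right; exists (y - c), y; split=> //.
- by rewrite leq_subLR.
- exact: run_start_gap.
- by congr (_ ++ factor_at _ _ _); lia.
Qed.

Lemma factor_at_shape s N : exists2 k, k < p &
  factor_at xi s N = periodic_word k N \/
  exists l y, [/\ 0 < l <= N, run_start y &
    factor_at xi s N = periodic_word k l ++ factor_at xi y (N - l)].
Proof.
have [c [run_c le_cs free]] := last_run_start s.
exists ((s - c) %% p); first by rewrite ltn_pmod ?p_gt0.
case: (factor_at_decomp N (andP run_c).1 le_cs free); first by left.
move=> [y [/andP[lt_sy le_y] run_y _ ->]]; right; exists (y - s), y; split=> //.
- by apply/andP; split; [rewrite subn_gt0 | rewrite leq_subLR].
- by congr (_ ++ factor_at _ _ _); lia.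
Qed.

(* [fuel] only bounds the recursion depth: fuel >= N already yields every
   factor read from a run start (run_words_mem). *)
Fixpoint run_words (fuel N : nat) : seq (seq X) :=
  periodic_word 0 N :: if fuel is fuel'.+1 then
    [seq periodic_word 0 d ++ w | d <- [seq d <- iota 1 N | admissible_gap p d],
                                   w <- run_words fuel' (N - d)]
  else [::].

Lemma run_words_mem fuel c N : N <= fuel -> run_start c -> factor_at xi c N \in run_words fuel N.
Proof.
elim: fuel c N => [|fuel IH] c N le_N run_c.
  by move: le_N; rewrite leqn0 => /eqP->; rewrite mem_seq1.
case: (factor_at_run_start N run_c) => [-> | [d [y [le_dN gap_d run_y ->]]]]; first exact: mem_head.
have d_gt0 : 0 < d by case/andP: gap_d => /(leq_ltn_trans (leq0n p)).
rewrite inE; apply/orP; right; apply/allpairsPdep; exists d, (factor_at xi y (N - d)); split=> //.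
  by rewrite mem_filter gap_d mem_iota d_gt0 add1n ltnS.
by apply: IH run_y; lia.
Qed.

Lemma size_run_words s fuel N : (1 < s)%R -> geom_dominated p s ->
  (INR (size (run_words fuel N)) <= s ^ N)%R.
Proof.
move=> s_gt1 dom; elim: fuel N => [|fuel IH] N; first by apply: pow_R1_Rle; lra.
rewrite [size _]/= size_allpairs_dep sumnE big_map big_filter S_INR INR_sum.
have := gap_sum_le N p_gt0 (Rlt_le _ _ s_gt1) dom.
have := le_bigR (iota 1 N) (P := admissible_gap p) (fun d _ => IH (N - d)).
by rewrite -/(gap_sum s p N); lra.
Qed.

Definition factor_words (n : nat) : seq (seq X) :=
  [seq u | k <- iota 0 p, u <- periodic_word k n ::
    [seq periodic_word k (n - m) ++ w | m <- iota 0 n, w <- run_words m m]].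

Lemma factor_at_mem s n : factor_at xi s n \in factor_words n.
Proof.
have [k lt_kp shape] := factor_at_shape s n.
apply/allpairsPdep; exists k, (factor_at xi s n); split=> //; first by rewrite mem_iota.
case: shape => [-> | [l [y [/andP[l_gt0 le_ln] run_y ->]]]]; first exact: mem_head.
rewrite inE; apply/orP; right; apply/allpairsPdep.
exists (n - l), (factor_at xi y (n - l)); split; last by rewrite subKn.
  by rewrite mem_iota; lia.
exact: run_words_mem.
Qed.

Lemma size_factor_words s n : (1 < s)%R -> geom_dominated p s ->
  (INR (size (factor_words n)) <= INR p * geom s n.+1)%R.
Proof.
move=> s_gt1 dom; set runs := \sum_(m <- iota 0 n) size (run_words m m).
have -> : size (factor_words n) = runs.+1 * p.
  rewrite size_allpairs_dep sumnE big_map (eq_bigr (fun=> runs.+1)) => [|k _].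
    by rewrite big_const_seq count_predT size_iota iter_addn_0.
  by rewrite [size _]/= size_allpairs_dep sumnE big_map.
rewrite mult_INR Rmult_comm S_INR INR_sum; apply: Rmult_le_compat_l; first exact: pos_INR.
have := le_bigR (iota 0 n) (P := fun _ => true) (fun m _ => size_run_words m m s_gt1 dom).
have := pow_R1_Rle s n (Rlt_le _ _ s_gt1).
rewrite geomSr /geom /index_iota subn0; lra.
Qed.

End QuasiperiodicWord.

Lemma fcompl_le_pow (X : finType) (xi : nat -> X) q p s n :
  is_period xi q p -> (forall d, is_period xi q d -> p <= d) -> quasiperiodic_with xi q ->
  (1 < s)%R -> geom_dominated p s -> (INR (fcompl xi n) <= INR p * s / (s - 1) * s ^ n)%R.
Proof.
move=> p_period p_min xi_qp s_gt1 dom.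
have -> : (INR p * s / (s - 1) * s ^ n = INR p * (s ^ n.+1 / (s - 1)))%R.
  by rewrite /=; field; lra.
have covered := factor_at_mem p_period p_min xi_qp ^~ n.
apply: (Rle_trans _ _ _ (le_INR _ _ (elimT leP (fcompl_le_size covered)))).
apply: (Rle_trans _ _ _ (size_factor_words p_period n s_gt1 dom)).
exact: Rmult_le_compat_l (pos_INR p) (geom_le n.+1 s_gt1).
Qed.

Theorem theorem3 (X : finType) (hX : 1 < #|X|) (tP : R)
  (htP : (tP ^ 3 - tP - 1)%R = 0%R) :
  exists c : R, (0 < c)%R /\
    forall xi : nat -> X, quasiperiodic xi ->
      exists nxi : nat, forall n : nat, nxi <= n ->
        (INR (fcompl xi n) <= c * tP ^ n)%R.
Proof.
have tP_gt := plastic_gt htP; have tP_gt1 : (1 < tP)%R by lra.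
have c_gt0 : (0 < 3 * tP / (tP - 1))%R by apply: Rdiv_lt_0_compat; lra.
exists (3 * tP / (tP - 1))%R; split=> // xi [q xi_qp].
have ex_period : exists d, is_period xi q d by exists (size q); exact: is_period_size xi_qp.1.
have [p p_period p_min] := ex_minnP ex_period.
have fcompl_le := fcompl_le_pow _ p_period p_min xi_qp.
case: (leqP p 3) => [le_p3 | lt_3p].
  have dom := geom_dominated_plastic htP (introT andP (conj (p_gt0 p_period) le_p3)).
  exists 0 => n _; apply: (Rle_trans _ _ _ (fcompl_le _ _ tP_gt1 dom)).
  rewrite /Rdiv; apply: Rmult_le_compat_r; first by apply: pow_le; lra.
  apply: Rmult_le_compat_r; first by left; apply: Rinv_0_lt_compat; lra.
  by apply: Rmult_le_compat_r; [lra | have := le_INR _ _ (elimT leP le_p3); rewrite /=; lra].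
have ratio_ge0 : (0 <= 33/25)%R by lra.
have [N dominated] := pow_dominated (INR p * (33/25) / (33/25 - 1)) c_gt0 (conj ratio_ge0 tP_gt).
exists N => n le_Nn; apply: (Rle_trans _ _ _ _ (dominated n le_Nn)).
by apply: (fcompl_le _ _ _ (geom_dominated_33_25 lt_3p)); lra.
Qed.
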